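(* The four identities (J1) $x\wedge y\approx y\wedge x$, (J2) $x\wedge(y\wedge z)\approx(x\wedge y)\wedge z$, (J4) $x''\approx x$, (J5) $x'\approx (x\wedge y)'\wedge(x\wedge y')'$ form a 4-base for the variety $\mathbb{BA}$ of Boolean algebras (in the language $\langle\wedge,{}'\rangle$). In particular, the idempotent law $x\wedge x\approx x$ follows from (J1), (J2), (J4), (J5).
   Context: Algebras are of type $\langle \wedge, {}'\rangle$ with $\wedge$ binary and ${}'$ unary. The variety $\mathbb{BA}$ of Boolean algebras in this language consists of the algebras $\langle B,\wedge,{}'\rangle$ obtained from Boolean algebras by keeping only meet and complement (equivalently, the variety generated by the two-element Boolean algebra $\mathbf 2$ with meet and complement). A base for a variety is an independent set of identities (no identity in the set follows from the others) that defines the variety; an $n$-base is a base with exactly $n$ identities. *)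

From Stdlib Require Import List.
Import ListNotations.

Inductive term : Type :=
  | Var : nat -> term
  | Meet : term -> term -> term
  | Comp : term -> term.

Record algebra : Type := Algebra {
  carrier :> Type;
  ameet : carrier -> carrier -> carrier;
  acomp : carrier -> carrier
}.

Fixpoint eval (A : algebra) (env : nat -> A) (t : term) : A :=
  match t with
  | Var n => env n
  | Meet s u => ameet A (eval A env s) (eval A env u)
  | Comp s => acomp A (eval A env s)
  end.

Definition identity : Type := (term * term)%type.

Definition satisfies (A : algebra) (e : identity) : Prop :=
  forall env : nat -> A, eval A env (fst e) = eval A env (snd e).

Definition satisfies_all (A : algebra) (S : list identity) : Prop :=
  forall e, In e S -> satisfies A e.

(* Semantic consequence (equivalent to derivability by Birkhoff's completeness). *)
Definition follows_from (S : list identity) (e : identity) : Prop :=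
  forall A : algebra, satisfies_all A S -> satisfies A e.

Definition two : algebra := Algebra bool andb negb.

(* Membership in the variety BA = V(2): satisfies every identity of 2. *)
Definition in_BA (A : algebra) : Prop :=
  forall e : identity, satisfies two e -> satisfies A e.

Definition defines_BA (S : list identity) : Prop :=
  forall A : algebra, satisfies_all A S <-> in_BA A.

Definition independent (S : list identity) : Prop :=
  forall i, i < length S ->
    ~ follows_from (firstn i S ++ skipn (Datatypes.S i) S) (nth i S (Var 0, Var 0)).

Definition is_base_BA (S : list identity) : Prop :=
  defines_BA S /\ independent S.

Notation x := (Var 0).
Notation y := (Var 1).
Notation z := (Var 2).

Definition J1 : identity := (Meet x y, Meet y x).
Definition J2 : identity := (Meet x (Meet y z), Meet (Meet x y) z).
Definition J4 : identity := (Comp (Comp x), x).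
Definition J5 : identity :=
  (Comp x, Meet (Comp (Meet x y)) (Comp (Meet x (Comp y)))).
Definition idem : identity := (Meet x x, x).

From Stdlib Require Import List Arith Lia.
Import ListNotations.

(* The identities force a ∧ a' to be a constant 0: by J5 and the symmetry
   a ∧ (a ∧ b')' = b ∧ (b ∧ a')',
     b ∧ b' = b ∧ (b ∧ a)' ∧ (b ∧ a')' = (a ∧ b)' ∧ a ∧ (a ∧ b')' = a ∧ a'.
   From this idempotence, 0 ∧ a = 0 and 0' ∧ a = a follow, and then the
   absorption a ∧ (a ∧ b)' = a ∧ b', which makes v ∧ p = v ∧ q a congruence for
   fixed v.  Hence v ∧ t(.., v, ..) = v ∧ t(.., 1, ..) and
   v' ∧ t(.., v, ..) = v' ∧ t(.., 0, ..), and since J5 recovers any element from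
   its meets with v and v', an identity of 2 reduces, one variable at a time,
   to its instances over {0, 1}, where it holds because 2 embeds into the
   algebra.  Independence is witnessed by four small models, each violating
   exactly one of the identities. *)

Definition env3 {X : Type} (a b c : X) : nat -> X :=
  fun n => match n with 0 => a | 1 => b | _ => c end.

Definition upd {X : Type} (f : nat -> X) (n : nat) (v : X) : nat -> X :=
  fun k => if Nat.eqb k n then v else f k.

Fixpoint max_var (t : term) : nat :=
  match t with
  | Var n => n
  | Meet t1 t2 => Nat.max (max_var t1) (max_var t2)
  | Comp t1 => max_var t1
  end.

Lemma eval_ext (A : algebra) (env env' : nat -> A) (t : term) :
  (forall k, k <= max_var t -> env k = env' k) -> eval A env t = eval A env' t.
Proof.
  intro E. induction t as [n | t1 IH1 t2 IH2 | t1 IH1]; simpl in *.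
  - apply E, le_n.
  - rewrite IH1, IH2 by (intros; apply E; lia). reflexivity.
  - rewrite IH1 by exact E. reflexivity.
Qed.

Section JAlgebra.

Variable A : algebra.
Hypothesis A_J : satisfies_all A [J1; J2; J4; J5].

Local Notation "a ⊓ b" := (ameet A a b) (at level 40, left associativity).
Local Notation "a ′" := (acomp A a) (at level 2, left associativity, format "a ′").

Lemma meetC (a b : A) : a ⊓ b = b ⊓ a.
Proof. exact (A_J J1 ltac:(simpl; tauto) (env3 a b a)). Qed.

Lemma meetA (a b c : A) : a ⊓ (b ⊓ c) = a ⊓ b ⊓ c.
Proof. exact (A_J J2 ltac:(simpl; tauto) (env3 a b c)). Qed.

Lemma compK (a : A) : a′′ = a.
Proof. exact (A_J J4 ltac:(simpl; tauto) (env3 a a a)). Qed.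

Lemma comp_split (a b : A) : a′ = (a ⊓ b)′ ⊓ (a ⊓ b′)′.
Proof. exact (A_J J5 ltac:(simpl; tauto) (env3 a b a)). Qed.

Lemma meetCA (a b c : A) : a ⊓ (b ⊓ c) = b ⊓ (a ⊓ c).
Proof. rewrite meetA, (meetC a b), <- meetA. reflexivity. Qed.

Lemma meetAC (a b c : A) : a ⊓ b ⊓ c = a ⊓ c ⊓ b.
Proof. rewrite <- meetA, (meetC b c), meetA. reflexivity. Qed.

Lemma comp_inj (a b : A) : a′ = b′ -> a = b.
Proof. intro E. rewrite <- (compK a), <- (compK b), E. reflexivity. Qed.

Lemma comp_split_r (a b : A) : b′ = (a ⊓ b)′ ⊓ (a′ ⊓ b)′.
Proof. rewrite (comp_split b a), (meetC b a), (meetC b a′). reflexivity. Qed.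

Lemma meet_comp_meet_swap (a b : A) : a ⊓ (a ⊓ b)′ = b′ ⊓ (a′ ⊓ b′)′.
Proof.
  transitivity ((a′ ⊓ b)′ ⊓ (a′ ⊓ b′)′ ⊓ (a ⊓ b)′).
  - rewrite <- comp_split, compK. reflexivity.
  - rewrite meetAC, (meetC (a′ ⊓ b)′), <- comp_split_r. reflexivity.
Qed.

Lemma meet_comp_meet_sym (a b : A) : a ⊓ (a ⊓ b′)′ = b ⊓ (b ⊓ a′)′.
Proof. rewrite meet_comp_meet_swap, compK, (meetC a′). reflexivity. Qed.

Lemma meet_compl_const (a b : A) : a ⊓ a′ = b ⊓ b′.
Proof.
  rewrite (comp_split a b), meetCA, meet_comp_meet_sym, meetCA, (meetC a b), <- comp_split.
  reflexivity.
Qed.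

Section Bounds.

Variable zero : A.
Hypothesis meet_compl : forall a : A, a ⊓ a′ = zero.

Lemma comp_meetxx (a : A) : a′ = (a ⊓ a)′ ⊓ zero′.
Proof. rewrite <- (meet_compl a). apply comp_split. Qed.

Lemma meet00 : zero ⊓ zero = zero.
Proof.
  assert (E : zero ⊓ zero = zero ⊓ zero ⊓ zero′)
    by (rewrite <- meetA, meet_compl; reflexivity).
  rewrite E, (comp_meetxx zero), meetA, !meet_compl. reflexivity.
Qed.

Lemma meet11 : zero′ ⊓ zero′ = zero′.
Proof. symmetry. rewrite (comp_meetxx zero) at 1. rewrite meet00. reflexivity. Qed.

Lemma meet1x (a : A) : zero′ ⊓ a = a.
Proof.
  rewrite <- (compK a), (comp_meetxx a′), meetCA, meet11. reflexivity.
Qed.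

End Bounds.

Lemma meetxx (a : A) : a ⊓ a = a.
Proof.
  pose proof (fun b => meet_compl_const b a) as meet_compl.
  apply comp_inj.
  rewrite (comp_meetxx _ meet_compl a).
  rewrite (meetC (a ⊓ a)′), (meet1x _ meet_compl). reflexivity.
Qed.

Lemma meet_absorb_comp (a b : A) : a ⊓ (a′ ⊓ b)′ = a.
Proof.
  rewrite <- (compK a) at 1.
  rewrite (comp_split a′ b), meetAC, meetxx, <- comp_split, compK. reflexivity.
Qed.

Lemma meet_comp_meet (a b : A) : a ⊓ (a ⊓ b)′ = a ⊓ b′.
Proof.
  rewrite (comp_split_r a b), meetA, (meetC a), <- meetA, meet_absorb_comp, meetC.
  reflexivity.
Qed.

Lemma meet_distr_l (a b c : A) : a ⊓ (b ⊓ c) = a ⊓ b ⊓ (a ⊓ c).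
Proof. rewrite (meetA (a ⊓ b)), (meetAC a b a), meetxx, meetA. reflexivity. Qed.

Lemma meet_cancel (a b c : A) : a ⊓ c = b ⊓ c -> a ⊓ c′ = b ⊓ c′ -> a = b.
Proof.
  intros E E'.
  apply comp_inj. rewrite (comp_split a c), (comp_split b c), E, E'. reflexivity.
Qed.

Lemma meet_comp_congr (a b c : A) : a ⊓ b = a ⊓ c -> a ⊓ b′ = a ⊓ c′.
Proof.
  intro E. rewrite <- (meet_comp_meet a b), <- (meet_comp_meet a c), E. reflexivity.
Qed.

Lemma eval_meet_congr (a : A) (env env' : nat -> A) (t : term) :
  (forall k, a ⊓ env k = a ⊓ env' k) -> a ⊓ eval A env t = a ⊓ eval A env' t.
Proof.
  intro E. induction t as [k | t1 IH1 t2 IH2 | t1 IH1]; simpl.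
  - apply E.
  - rewrite meet_distr_l, IH1, IH2, <- meet_distr_l. reflexivity.
  - apply meet_comp_congr, IH1.
Qed.

Section Shannon.

Variable zero : A.
Hypothesis meet_compl : forall a : A, a ⊓ a′ = zero.

Lemma meetx0 (a : A) : a ⊓ zero = zero.
Proof. rewrite <- (meet_compl a), meetA, meetxx. reflexivity. Qed.

Lemma meetx1 (a : A) : a ⊓ zero′ = a.
Proof. rewrite meetC. exact (meet1x zero meet_compl a). Qed.

Definition of_bool (b : bool) : A := if b then zero′ else zero.

Lemma eval_of_bool (b : nat -> bool) (t : term) :
  eval A (fun k => of_bool (b k)) t = of_bool (eval two b t).
Proof.
  induction t as [k | t1 IH1 t2 IH2 | t1 IH1]; simpl.
  - reflexivity.
  - rewrite IH1, IH2.
    destruct (eval two b t1), (eval two b t2); simpl;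
      [apply meetxx | apply meetx0 | apply meet_compl | apply meetxx].
  - rewrite IH1. destruct (eval two b t1); simpl; [apply compK | reflexivity].
Qed.

Lemma eval_upd_one (env : nat -> A) (n : nat) (t : term) :
  env n ⊓ eval A env t = env n ⊓ eval A (upd env n zero′) t.
Proof.
  apply eval_meet_congr. intro k. unfold upd.
  destruct (Nat.eqb_spec k n) as [-> | _].
  - rewrite meetxx, meetx1. reflexivity.
  - reflexivity.
Qed.

Lemma eval_upd_zero (env : nat -> A) (n : nat) (t : term) :
  (env n)′ ⊓ eval A env t = (env n)′ ⊓ eval A (upd env n zero) t.
Proof.
  apply eval_meet_congr. intro k. unfold upd.
  destruct (Nat.eqb_spec k n) as [-> | _].
  - rewrite meetx0, meetC, meet_compl. reflexivity.
  - reflexivity.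
Qed.

Lemma upd_of_bool (env : nat -> A) (b : nat -> bool) (n : nat) (v : bool) :
  (forall k, S n <= k -> env k = of_bool (b k)) ->
  forall k, n <= k -> upd env n (of_bool v) k = of_bool (upd b n v k).
Proof.
  intros Henv k Hk. unfold upd.
  destruct (Nat.eqb_spec k n); [reflexivity | apply Henv; lia].
Qed.

Lemma eval_eq_of_two (t s : term) :
  (forall b, eval two b t = eval two b s) ->
  forall n b env, (forall k, n <= k -> env k = of_bool (b k)) ->
  eval A env t = eval A env s.
Proof.
  intros Hts n. induction n as [| n IH]; intros b env Henv.
  - rewrite (eval_ext A env (fun k => of_bool (b k)) t),
      (eval_ext A env (fun k => of_bool (b k)) s) by (intros; apply Henv; lia).
    rewrite !eval_of_bool, Hts. reflexivity.
  - apply (meet_cancel _ _ (env n)).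
    + rewrite !(meetC _ (env n)), eval_upd_one, (eval_upd_one _ _ s).
      f_equal. exact (IH (upd b n true) _ (upd_of_bool env b n true Henv)).
    + rewrite !(meetC _ (env n)′), eval_upd_zero, (eval_upd_zero _ _ s).
      f_equal. exact (IH (upd b n false) _ (upd_of_bool env b n false Henv)).
Qed.

End Shannon.

Lemma J_algebra_in_BA : in_BA A.
Proof.
  intros [t s] Hts env. simpl in *.
  set (zero := env 0 ⊓ (env 0)′).
  set (N := S (Nat.max (max_var t) (max_var s))).
  set (env' := fun k => if k <? N then env k else zero′).
  assert (Henv : forall u, max_var u < N -> eval A env u = eval A env' u).
  { intros u Hu. apply eval_ext. intros k Hk. unfold env'.
    destruct (Nat.ltb_spec k N); [reflexivity | lia]. }
  rewrite !Henv by lia.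
  apply (eval_eq_of_two zero (fun a => meet_compl_const a (env 0)) t s Hts N (fun _ => true)).
  intros k Hk. unfold env'. destruct (Nat.ltb_spec k N); [lia | reflexivity].
Qed.

End JAlgebra.

Ltac check_identities_in_model :=
  let e := fresh "e" in let He := fresh "He" in let env := fresh "env" in
  intros e He; simpl in He;
  repeat (destruct He as [<- | He];
          [intro env; simpl; destruct (env 0), (env 1), (env 2); reflexivity |]);
  contradiction.

Lemma two_satisfies_J : satisfies_all two [J1; J2; J4; J5].
Proof. check_identities_in_model. Qed.

Lemma J_defines_BA : defines_BA [J1; J2; J4; J5].
Proof.
  intro A. split.
  - apply J_algebra_in_BA.
  - intros HA e He. exact (HA e (two_satisfies_J e He)).
Qed.

Lemma not_follows_from (A : algebra) (S : list identity) (e : identity) :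
  satisfies_all A S -> ~ satisfies A e -> ~ follows_from S e.
Proof. intros HA He F. exact (He (F A HA)). Qed.

Definition left_proj_model : algebra := Algebra bool (fun a _ => a) (fun a => a).

Inductive three : Type := O3 | P3 | Q3.

Definition meet3 (a b : three) : three :=
  match a, b with
  | O3, u | u, O3 => u
  | P3, P3 => P3
  | Q3, Q3 => Q3
  | _, _ => O3
  end.

Definition comp3 (a : three) : three :=
  match a with O3 => O3 | P3 => Q3 | Q3 => P3 end.

Definition three_model : algebra := Algebra three meet3 comp3.

Definition const_comp_model : algebra := Algebra bool andb (fun _ => false).

Definition id_comp_model : algebra := Algebra bool andb (fun a => a).

Lemma J_independent : independent [J1; J2; J4; J5].
Proof.
  intros i Hi. simpl in Hi.
  destruct i as [| [| [| [| i]]]]; simpl; [ | | | | lia].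
  - apply (not_follows_from left_proj_model); [check_identities_in_model |].
    intro H. discriminate (H (env3 true false true)).
  - apply (not_follows_from three_model); [check_identities_in_model |].
    intro H. discriminate (H (env3 P3 P3 Q3)).
  - apply (not_follows_from const_comp_model); [check_identities_in_model |].
    intro H. discriminate (H (env3 true true true)).
  - apply (not_follows_from id_comp_model); [check_identities_in_model |].
    intro H. discriminate (H (env3 true false true)).
Qed.

Theorem theorem2p2 :
  is_base_BA [J1; J2; J4; J5] /\ length [J1; J2; J4; J5] = 4 /\
  follows_from [J1; J2; J4; J5] idem.
Proof.
  split; [| split].
  - exact (conj J_defines_BA J_independent).
  - reflexivity.
  - intros A HA env. exact (meetxx A HA (env 0)).
Qed.
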